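(* Let $\theta\in(0,\pi/4)$ and $|\Psi\rangle=\sin\theta|00\rangle+\cos\theta|11\rangle$ on system qubits $1,2$. Let $|\varphi_\pm\rangle=\cos\theta|0\rangle\mp\sin\theta|1\rangle$, and $$\Omega_1=|00\rangle\langle00|+|11\rangle\langle11|,\quad \Omega_2=\mathbb 1-|{+}\rangle\langle{+}|\otimes|\varphi_+\rangle\langle\varphi_+|,\quad \Omega_3=\mathbb 1-|{-}\rangle\langle{-}|\otimes|\varphi_-\rangle\langle\varphi_-|.$$ Let $R_2=H\otimes\begin{pmatrix}\cos\theta&-\sin\theta\\ \sin\theta&\cos\theta\end{pmatrix}$ and $R_3=XH\otimes\begin{pmatrix}\cos\theta&\sin\theta\\ -\sin\theta&\cos\theta\end{pmatrix}$. Define, with ancilla qubits $a_1,a_2,a_3$, $$\mathcal M_1=(\mathbb 1\otimes|0\rangle\langle0|_{a_1})\mathcal C_{X1a_1}\mathcal C_{X2a_1},$$ $$\mathcal M^t_i=(\mathbb 1\otimes|0\rangle\langle0|_{a_i})(R_i^\dagger\otimes\mathbb 1)(X\otimes X\otimes\mathbb 1)\,\mathcal C^2_{X12a_i}\,(X\otimes X\otimes\mathbb 1)(R_i\otimes\mathbb 1),\quad i=2,3.$$ Then $\mathcal M^t_i(\sigma\otimes|0\rangle\langle0|_{a_i})=\Omega_i\sigma\otimes|0\rangle\langle0|_{a_i}$ for $i=2,3$, $\Omega_1\Omega_2\Omega_3=|\Psi\rangle\langle\Psi|$, and hence for every two-qubit operator $\sigma$, $$\mathcal M_1\mathcal M^t_2\mathcal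 M^t_3\big(\sigma\otimes|000\rangle\langle000|\big)=|\Psi\rangle\langle\Psi|\sigma\otimes|000\rangle\langle000|.$$ Furthermore, for $i=2,3$, the two-ancilla operator $\mathcal M^b_i=\mathbb 1-(\mathbb 1\otimes|00\rangle\langle00|_{aa'})(R_i^\dagger\otimes\mathbb 1)\mathcal C_{X1a}\mathcal C_{X2a'}(R_i\otimes\mathbb 1)$ satisfies $\mathcal M^b_i(\sigma\otimes|00\rangle\langle00|_{aa'})=\Omega_i\sigma\otimes|00\rangle\langle00|_{aa'}$, so replacing each $\mathcal M^t_i$ by $\mathcal M^b_i$ (with fresh ancilla pairs) yields the same action on inputs with all ancillas in $|0\rangle$.
   Context: $|\pm\rangle=(|0\rangle\pm|1\rangle)/\sqrt2$; $H$ is the Hadamard gate, $X$ is Pauli-$X$. $\mathcal C_{Xja}$ is the CNOT gate with control system qubit $j$ and target ancilla $a$; $\mathcal C^2_{X12a}$ is the Toffoli gate with controls system qubits $1,2$ and target $a$ (flips $a$ iff both controls are $|1\rangle$). All operators are extended by the identity on qubits they do not act on; $\sigma$ is any operator on the two system qubits. *)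

From HB Require Import structures.
From mathcomp Require Import all_boot all_order all_algebra.
From mathcomp Require Import reals trigo.
From mathcomp.real_closed Require Import complex mxtens.

Set Implicit Arguments.
Unset Strict Implicit.
Unset Printing Implicit Defensive.

Import Order.TTheory GRing.Theory Num.Theory.
Local Open Scope ring_scope.

Section QC.
Variable R : realType.
Local Notation C := (R[i]).

Definition cr (x : R) : C := Complex x 0.

Definition adj {m n} (A : 'M[C]_(m, n)) : 'M[C]_(n, m) := (map_mx conjc A)^T.

Definition ket0 : 'cV[C]_2 := \col_i (if i == 0 :> nat then 1 else 0).
Definition ket1 : 'cV[C]_2 := \col_i (if i == 1 :> nat then 1 else 0).
Definition proj {n} (v : 'cV[C]_n) : 'M[C]_n := v *m adj v.
Definition P0 : 'M[C]_2 := proj ket0.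
Definition P1 : 'M[C]_2 := proj ket1.
Definition isq2 : C := cr (Num.sqrt 2)^-1.
Definition ketp : 'cV[C]_2 := isq2 *: (ket0 + ket1).
Definition ketm : 'cV[C]_2 := isq2 *: (ket0 - ket1).
Definition Xg : 'M[C]_2 := ket0 *m adj ket1 + ket1 *m adj ket0.
Definition Hg : 'M[C]_2 :=
  isq2 *: (ket0 *m adj ket0 + ket0 *m adj ket1 + ket1 *m adj ket0 - ket1 *m adj ket1).
Definition mx2 (a b c d : R) : 'M[C]_2 :=
  \matrix_(i, j) cr (if i == 0 :> nat then (if j == 0 :> nat then a else b)
                     else (if j == 0 :> nat then c else d)).

(* number of states of m qubits, so that qdim m.+1 = 2 * qdim m *)
Definition qdim (m : nat) : nat := iter m (muln 2) 1.

(* the single-qubit operator U acting on qubit k (0-based) of an m-qubit register,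
   extended by the identity on the other qubits *)
Fixpoint at1 (m k : nat) (U : 'M[C]_2) {struct m} : 'M[C]_(qdim m) :=
  match m return 'M[C]_(qdim m) with
  | 0 => 1%:M
  | m'.+1 => match k with
             | 0 => U *t (1%:M : 'M[C]_(qdim m'))
             | k'.+1 => (1%:M : 'M[C]_2) *t at1 m' k' U
             end
  end.

Fixpoint zeroproj (m : nat) : 'M[C]_(qdim m) :=
  match m return 'M[C]_(qdim m) with
  | 0 => 1%:M
  | m'.+1 => P0 *t zeroproj m'
  end.

(* Global register: two system qubits (1, 2) tensored with m ancilla qubits.
   Type 'M_(2 * 2 * qdim m). *)
Inductive qpos := Sys1 | Sys2 | Anc of nat.  (* Anc k : k-th ancilla, 0-based *)

Definition sysop (m : nat) (A : 'M[C]_(2 * 2)) : 'M[C]_(2 * 2 * qdim m) :=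
  A *t (1%:M : 'M[C]_(qdim m)).

Definition onq (m : nat) (q : qpos) (U : 'M[C]_2) : 'M[C]_(2 * 2 * qdim m) :=
  match q with
  | Sys1 => sysop m (U *t (1%:M : 'M[C]_2))
  | Sys2 => sysop m ((1%:M : 'M[C]_2) *t U)
  | Anc k => (1%:M : 'M[C]_(2 * 2)) *t at1 m k U
  end.

Definition CX (m : nat) (j a : qpos) : 'M[C]_(2 * 2 * qdim m) :=
  onq m j P0 + onq m j P1 *m onq m a Xg.

Definition CCX (m : nat) (j k a : qpos) : 'M[C]_(2 * 2 * qdim m) :=
  (onq m j P1 *m onq m k P1) *m onq m a Xg + (1%:M - onq m j P1 *m onq m k P1).

Variable theta : R.

Definition Psi : 'cV[C]_(2 * 2) :=
  cr (sin theta) *: (ket0 *t ket0) + cr (cos theta) *: (ket1 *t ket1).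
Definition phip : 'cV[C]_2 := cr (cos theta) *: ket0 - cr (sin theta) *: ket1.
Definition phim : 'cV[C]_2 := cr (cos theta) *: ket0 + cr (sin theta) *: ket1.

Definition Omega (i : nat) : 'M[C]_(2 * 2) :=
  match i with
  | 1 => P0 *t P0 + P1 *t P1
  | 2 => 1%:M - proj ketp *t proj phip
  | _ => 1%:M - proj ketm *t proj phim
  end.

Definition Rg (i : nat) : 'M[C]_(2 * 2) :=
  if i == 2 then Hg *t mx2 (cos theta) (- sin theta) (sin theta) (cos theta)
  else (Xg *m Hg) *t mx2 (cos theta) (sin theta) (- sin theta) (cos theta).

Definition M1 (m : nat) (a : nat) : 'M[C]_(2 * 2 * qdim m) :=
  onq m (Anc a) P0 *m CX m Sys1 (Anc a) *m CX m Sys2 (Anc a).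

Definition Mt (m : nat) (i a : nat) : 'M[C]_(2 * 2 * qdim m) :=
  onq m (Anc a) P0 *m sysop m (adj (Rg i)) *m sysop m (Xg *t Xg)
  *m CCX m Sys1 Sys2 (Anc a) *m sysop m (Xg *t Xg) *m sysop m (Rg i).

Definition Mb (m : nat) (i a a' : nat) : 'M[C]_(2 * 2 * qdim m) :=
  1%:M - onq m (Anc a) P0 *m onq m (Anc a') P0 *m sysop m (adj (Rg i))
         *m CX m Sys1 (Anc a) *m CX m Sys2 (Anc a') *m sysop m (Rg i).

End QC.

From HB Require Import structures.
From mathcomp Require Import all_boot all_order all_algebra.
From mathcomp Require Import reals trigo.
From mathcomp.real_closed Require Import complex mxtens.
From mathcomp Require Import lra.
Import Order.TTheory GRing.Theory Num.Theory.
Local Open Scope ring_scope.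
Set Implicit Arguments.
Unset Strict Implicit.
Unset Printing Implicit Defensive.

(* The circuits are analysed in "controlled form": an operator on the
   system-plus-ancilla register written as E (x) 1 + F (x) N, where E, F act on
   the two system qubits and N flips ancillas.  Applied to an input
   sigma (x) |0..0><0..0| and followed by the projection of the ancillas back
   onto |0>, every branch in which an ancilla was flipped vanishes, so the whole
   circuit acts on the system as E alone (anc_parity, anc_select,
   anc_pair_select).  For M_1 this system operator is Omega_1; for M^t_i and
   M^b_i it is R_i^dag (1 - |00><00|) R_i = Omega_i, since R_i^dag |00> equals
   |+>|phi_+> (i = 2) or |->|phi_-> (i = 3).  Finally Omega_2 Omega_3 =
   1 - P_- - P_+ because |+> and |-> are orthogonal, and a direct computation
   gives Omega_1 (1 - P_- - P_+) = |Psi><Psi|; acting operators compose, which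
   yields the two full circuits.

   All gates of the statement are real matrices, whose adjoint is the
   transpose; every identity that depends on the angle is therefore checked on
   real matrices, entrywise, using cos^2 + sin^2 = 1.  No constraint on the
   angle is needed. *)

Section TensorAlgebra.
Variable K : comPzRingType.

Lemma tensmx11 m n : (1%:M : 'M[K]_m) *t (1%:M : 'M[K]_n) = 1%:M.
Proof.
apply/matrixP=> i j.
case: (mxtens_indexP i) => i0 i1; case: (mxtens_indexP j) => j0 j1.
rewrite tensmxE !mxE (inj_eq (can_inj (@mxtens_indexK _ _))) xpair_eqE.
by case: (i0 == j0); case: (i1 == j1); rewrite ?mulr1 ?mulr0.
Qed.

Lemma tensmxDl m n p q (A B : 'M[K]_(m, n)) (D : 'M[K]_(p, q)) :
  (A + B) *t D = A *t D + B *t D.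
Proof. by apply/matrixP=> i j; rewrite !mxE mulrDl. Qed.

Lemma tensmxBl m n p q (A B : 'M[K]_(m, n)) (D : 'M[K]_(p, q)) :
  (A - B) *t D = A *t D - B *t D.
Proof. by apply/matrixP=> i j; rewrite !mxE mulrBl. Qed.

Lemma tensmxZl m n p q (a : K) (A : 'M[K]_(m, n)) (D : 'M[K]_(p, q)) :
  (a *: A) *t D = a *: (A *t D).
Proof. by apply/matrixP=> i j; rewrite !mxE mulrA. Qed.

Lemma sum_tens m n (F : 'I_(m * n) -> K) :
  \sum_k F k = \sum_i \sum_j F (mxtens_index (i, j)).
Proof.
rewrite pair_big /= (reindex (@mxtens_index m n)) /=; first by apply: eq_bigr => -[].
by apply: onW_bij; exists (@mxtens_unindex m n); [exact: mxtens_indexK | exact: mxtens_unindexK].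
Qed.

End TensorAlgebra.

Section ControlledForm.
Variables (K : comPzRingType) (n q : nat).
Implicit Types (E F S T : 'M[K]_n) (N Q : 'M[K]_q).

Lemma ctrl_mul E1 F1 E2 F2 N1 N2 :
  (E1 *t 1%:M + F1 *t N1) *m (E2 *t 1%:M + F2 *t N2) =
  (E1 *m E2) *t 1%:M + (E1 *m F2) *t N2 + (F1 *m E2) *t N1
  + (F1 *m F2) *t (N1 *m N2).
Proof. by rewrite mulmxDl !mulmxDr !tensmx_mul !mulmx1 !mul1mx addrA. Qed.

Lemma sys_sandwich S T F N :
  (S *t 1%:M) *m (F *t N) *m (T *t 1%:M) = (S *m F *m T) *t N.
Proof. by rewrite !tensmx_mul mul1mx mulmx1. Qed.

(* Z is the projector onto the ancilla input state and Q the projection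
   applied to the ancillas at the end of the circuit. *)
Variables (Z : 'M[K]_q) (sigma : 'M[K]_n).

Lemma anc_keep Q E : Q *m Z = Z ->
  (1%:M *t Q) *m (E *t 1%:M) *m (sigma *t Z) = (E *m sigma) *t Z.
Proof. by move=> QZ; rewrite !tensmx_mul mul1mx mulmx1 QZ. Qed.

Lemma anc_kill Q F N : Q *m N *m Z = 0 ->
  (1%:M *t Q) *m (F *t N) *m (sigma *t Z) = 0.
Proof. by move=> QNZ; rewrite !tensmx_mul mul1mx QNZ tensmx0. Qed.

(* Two controlled flips of the same ancilla (as in M_1): the ancilla returns to
   its input exactly on the branches E1 E2 and F1 F2. *)
Lemma anc_parity Q E1 F1 E2 F2 N :
  Q *m Z = Z -> Q *m N *m Z = 0 -> N *m N = 1%:M ->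
  (1%:M *t Q) *m (E1 *t 1%:M + F1 *t N) *m (E2 *t 1%:M + F2 *t N) *m (sigma *t Z)
  = ((E1 *m E2 + F1 *m F2) *m sigma) *t Z.
Proof.
move=> QZ QNZ NN.
rewrite -(mulmxA (1%:M *t Q)) ctrl_mul NN !mulmxDr !mulmxDl.
by rewrite !anc_keep // !anc_kill // !addr0 -tensmxDl -mulmxDl.
Qed.

Lemma anc_select Q S1 S2 T1 T2 E F N : Q *m Z = Z -> Q *m N *m Z = 0 ->
  (1%:M *t Q) *m (S1 *t 1%:M) *m (S2 *t 1%:M) *m (E *t 1%:M + F *t N)
    *m (T1 *t 1%:M) *m (T2 *t 1%:M) *m (sigma *t Z)
  = (S1 *m (S2 *m E *m T1) *m T2 *m sigma) *t Z.
Proof.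
move=> QZ QNZ.
have -> : (1%:M *t Q) *m (S1 *t 1%:M) *m (S2 *t 1%:M) *m (E *t 1%:M + F *t N)
    *m (T1 *t 1%:M) *m (T2 *t 1%:M) = (1%:M *t Q) *m
    (((S1 *t 1%:M) *m (S2 *t 1%:M)) *m (E *t 1%:M + F *t N)
      *m ((T1 *t 1%:M) *m (T2 *t 1%:M))).
  by rewrite !mulmxA.
rewrite !tensmx_mul !mulmx1 mulmxDr mulmxDl !sys_sandwich mulmxDr mulmxDl.
by rewrite anc_keep // anc_kill // addr0 !mulmxA.
Qed.

Lemma anc_pair_select Q1 Q2 S T E1 F1 E2 F2 N1 N2 :
  Q1 *m Q2 *m Z = Z -> Q1 *m Q2 *m N1 *m Z = 0 -> Q1 *m Q2 *m N2 *m Z = 0 ->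
  Q1 *m Q2 *m (N1 *m N2) *m Z = 0 ->
  (1%:M - (1%:M *t Q1) *m (1%:M *t Q2) *m (S *t 1%:M) *m (E1 *t 1%:M + F1 *t N1)
     *m (E2 *t 1%:M + F2 *t N2) *m (T *t 1%:M)) *m (sigma *t Z)
  = ((1%:M - S *m (E1 *m E2) *m T) *m sigma) *t Z.
Proof.
move=> QZ QN1 QN2 QN12.
have -> : (1%:M *t Q1) *m (1%:M *t Q2) *m (S *t 1%:M) *m (E1 *t 1%:M + F1 *t N1)
     *m (E2 *t 1%:M + F2 *t N2) *m (T *t 1%:M) = (1%:M *t (Q1 *m Q2)) *m
     ((S *t 1%:M) *m ((E1 *t 1%:M + F1 *t N1) *m (E2 *t 1%:M + F2 *t N2)) *m (T *t 1%:M)).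
  by rewrite tensmx_mul mulmx1 !mulmxA.
rewrite mulmxBl mul1mx ctrl_mul !(mulmxDr, mulmxDl) !sys_sandwich.
by rewrite anc_keep // !anc_kill // !addr0 mul1mx mulNmx tensmxBl.
Qed.

End ControlledForm.

Ltac entrywise :=
  apply/matrixP=> -[[|[|?]] ?] -[[|[|?]] ?] //;
  do ?[rewrite !mxE | rewrite big_ord_recl | rewrite big_ord0] => /=;
  rewrite ?(mulr1, mul1r, mulr0, mul0r, addr0, add0r, subr0, sub0r).

Section RealGates.
Variable R : realType.
Local Notation cplx := (map_mx (real_complex R)).

(* rsq2 is 1/sqrt 2, rrot t the rotation by t, and rphi t = rrot t^T |0>, so
   that |phi_+> = rphi theta and |phi_-> = rphi (- theta). *)
Definition rket0 : 'cV[R]_2 := \col_i (if i == 0 :> nat then 1 else 0).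
Definition rket1 : 'cV[R]_2 := \col_i (if i == 1 :> nat then 1 else 0).
Definition rproj n (v : 'cV[R]_n) : 'M[R]_n := v *m v^T.
Definition rX : 'M[R]_2 := rket0 *m rket1^T + rket1 *m rket0^T.
Definition rsq2 : R := (Num.sqrt 2)^-1.
Definition rH : 'M[R]_2 := rsq2 *:
  (rket0 *m rket0^T + rket0 *m rket1^T + rket1 *m rket0^T - rket1 *m rket1^T).
Definition rketp : 'cV[R]_2 := rsq2 *: (rket0 + rket1).
Definition rketm : 'cV[R]_2 := rsq2 *: (rket0 - rket1).
Definition rmx2 (a b c d : R) : 'M[R]_2 :=
  \matrix_(i, j) (if i == 0 :> nat then (if j == 0 :> nat then a else b)
                  else (if j == 0 :> nat then c else d)).
Definition rrot (t : R) : 'M[R]_2 := rmx2 (cos t) (- sin t) (sin t) (cos t).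
Definition rphi (t : R) : 'cV[R]_2 := cos t *: rket0 - sin t *: rket1.
Definition rPsi (t : R) : 'cV[R]_(2 * 2) :=
  sin t *: (rket0 *t rket0) + cos t *: (rket1 *t rket1).

Lemma cr_real (x : R) : cr x = real_complex R x.
Proof. by []. Qed.

Lemma adj_real m n (A : 'M[R]_(m, n)) : adj (cplx A) = cplx A^T.
Proof. by apply/matrixP=> i j; rewrite /adj !mxE conjc_real. Qed.

Lemma proj_real n (v : 'cV[R]_n) : proj (cplx v) = cplx (rproj v).
Proof. by rewrite /proj adj_real -map_mxM. Qed.

Lemma rproj_scale n (a : R) (v : 'cV[R]_n) : rproj (a *: v) = a ^+ 2 *: rproj v.
Proof. by rewrite /rproj linearZ /= -scalemxAl -scalemxAr scalerA. Qed.

Lemma rsq2_sqr : rsq2 ^+ 2 = 2^-1.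
Proof. by rewrite /rsq2 exprVn sqr_sqrtr. Qed.

Lemma ket0_real : ket0 R = cplx rket0.
Proof. by apply/matrixP=> i j; rewrite !mxE; case: ifP; rewrite ?rmorph1 ?rmorph0. Qed.

Lemma ket1_real : ket1 R = cplx rket1.
Proof. by apply/matrixP=> i j; rewrite !mxE; case: ifP; rewrite ?rmorph1 ?rmorph0. Qed.

Lemma P0_real : P0 R = cplx (rproj rket0).
Proof. by rewrite /P0 ket0_real proj_real. Qed.

Lemma P1_real : P1 R = cplx (rproj rket1).
Proof. by rewrite /P1 ket1_real proj_real. Qed.

Lemma X_real : Xg R = cplx rX.
Proof. by rewrite /Xg ket0_real ket1_real !adj_real -!map_mxM -map_mxD. Qed.

Lemma H_real : Hg R = cplx rH.
Proof.
rewrite /Hg /isq2 cr_real ket0_real ket1_real !adj_real.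
by rewrite -!map_mxM -!map_mxD -map_mxB -map_mxZ.
Qed.

Lemma ketp_real : ketp R = cplx rketp.
Proof. by rewrite /ketp /isq2 cr_real ket0_real ket1_real -map_mxD -map_mxZ. Qed.

Lemma ketm_real : ketm R = cplx rketm.
Proof. by rewrite /ketm /isq2 cr_real ket0_real ket1_real -map_mxB -map_mxZ. Qed.

Lemma mx2_real a b c d : mx2 a b c d = cplx (rmx2 a b c d).
Proof. by apply/matrixP=> i j; rewrite !mxE. Qed.

Lemma rX_invol : rX *m rX = 1.
Proof. by entrywise. Qed.

Lemma rX_sym : rX^T = rX.
Proof. by entrywise. Qed.

Lemma rX_P1_X : rX *m rproj rket1 *m rX = rproj rket0.
Proof. by entrywise. Qed.

Lemma rP0_idem : rproj rket0 *m rproj rket0 = rproj rket0.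
Proof. by entrywise. Qed.

Lemma rP0_X_P0 : rproj rket0 *m rX *m rproj rket0 = 0.
Proof. by entrywise. Qed.

Lemma rH_orth : rH^T *m rH = 1.
Proof.
have := rsq2_sqr; rewrite expr2 => h.
by entrywise; lra.
Qed.

Lemma rH_ket0 : rH^T *m rket0 = rketp.
Proof. by entrywise. Qed.

Lemma rXH_ket0 : (rX *m rH)^T *m rket0 = rketm.
Proof. by entrywise. Qed.

Lemma rketp_ketm : rketp^T *m rketm = 0.
Proof. by entrywise; lra. Qed.

Lemma rrot_orth t : (rrot t)^T *m rrot t = 1.
Proof.
have := cos2Dsin2 t; rewrite !expr2 => h.
by entrywise; lra.
Qed.

Lemma rrot_ket0 t : (rrot t)^T *m rket0 = rphi t.
Proof. by rewrite /rphi; entrywise. Qed.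

Lemma rOmega1_proj t :
  (rproj rket0 *t rproj rket0 + rproj rket1 *t rproj rket1) *m
  (1%:M - rproj rketm *t rproj (rphi (- t)) - rproj rketp *t rproj (rphi t))
  = rproj (rPsi t).
Proof.
rewrite /rketm /rketp !rproj_scale rsq2_sqr !tensmxZl -(tensmx11 _ 2 2).
apply/matrixP=> i j.
case: (mxtens_indexP i) => i0 i1; case: (mxtens_indexP j) => j0 j1.
rewrite !mxE !sum_tens !big_ord_recl !big_ord0 !mxE !mxtens_indexK /=.
rewrite !big_ord_recl !big_ord0 !mxE /= cosN sinN.
move: i0 i1 j0 j1 => -[[|[|?]] ?] // -[[|[|?]] ?] // -[[|[|?]] ?] // -[[|[|?]] ?] //=.
all: have := cos2Dsin2 t.
all: rewrite ?(mulr1, mul1r, mulr0, mul0r, addr0, add0r, subr0, sub0r, mulr1n, mulr0n).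
all: nra.
Qed.

End RealGates.

Section Adjoint.
Variable R : realType.
Local Notation C := R[i].

Lemma adjM m n p (A : 'M[C]_(m, n)) (B : 'M[C]_(n, p)) :
  adj (A *m B) = adj B *m adj A.
Proof. by rewrite /adj map_mxM trmx_mul. Qed.

Lemma adjK m n (A : 'M[C]_(m, n)) : adj (adj A) = A.
Proof. by apply/matrixP=> i j; rewrite /adj !mxE conjcK. Qed.

Lemma adj_tens m n p r (A : 'M[C]_(m, n)) (B : 'M[C]_(p, r)) :
  adj (A *t B) = adj A *t adj B.
Proof. by rewrite /adj map_mxT trmx_tens. Qed.

Lemma proj_tens m n (u : 'cV[C]_m) (v : 'cV[C]_n) :
  proj (u *t v) = proj u *t proj v.
Proof. by rewrite /proj -tensmx_mul -adj_tens. Qed.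

Lemma proj_conj n (A : 'M[C]_n) (v : 'cV[C]_n) :
  adj A *m proj v *m A = proj (adj A *m v).
Proof. by rewrite /proj adjM adjK !mulmxA. Qed.

End Adjoint.

Section ComplexGates.
Variable R : realType.
Local Notation cplx := (map_mx (real_complex R)).

Lemma X_invol : Xg R *m Xg R = 1.
Proof. by rewrite X_real -map_mxM rX_invol map_mx1. Qed.

Lemma X_adj : adj (Xg R) = Xg R.
Proof. by rewrite X_real adj_real rX_sym. Qed.

Lemma X_P1_X : Xg R *m P1 R *m Xg R = P0 R.
Proof. by rewrite X_real P1_real P0_real -!map_mxM rX_P1_X. Qed.

Lemma H_unitary : adj (Hg R) *m Hg R = 1.
Proof. by rewrite H_real adj_real -map_mxM rH_orth map_mx1. Qed.

Lemma P0_idem : P0 R *m P0 R = P0 R.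
Proof. by rewrite P0_real -map_mxM rP0_idem. Qed.

Lemma P0_X_P0 : P0 R *m Xg R *m P0 R = 0.
Proof. by rewrite P0_real X_real -!map_mxM rP0_X_P0 map_mx0. Qed.

Lemma proj_ketp_ketm : proj (ketp R) *m proj (ketm R) = 0.
Proof.
have orth : adj (ketp R) *m ketm R = 0.
  by rewrite ketp_real ketm_real adj_real -map_mxM rketp_ketm map_mx0.
by rewrite /proj mulmxA -(mulmxA (ketp R)) orth mulmx0 mul0mx.
Qed.

Lemma rot_unitary t : adj (cplx (rrot t)) *m cplx (rrot t) = 1.
Proof. by rewrite adj_real -map_mxM rrot_orth map_mx1. Qed.

Lemma rot_ket0 t : adj (cplx (rrot t)) *m ket0 R = cplx (rphi t).
Proof. by rewrite adj_real ket0_real -map_mxM rrot_ket0. Qed.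

End ComplexGates.

(* The rotations R_2, R_3 map |00> to |+>|phi_+> and |->|phi_->, so that
   conjugating the projector |00><00| by them produces 1 - Omega_i. *)
Section RotatedFrames.
Variables (R : realType) (theta : R).
Local Notation cplx := (map_mx (real_complex R)).

Lemma phip_real : phip theta = cplx (rphi theta).
Proof. by rewrite /phip !cr_real ket0_real ket1_real -!map_mxZ -map_mxB. Qed.

Lemma phim_real : phim theta = cplx (rphi (- theta)).
Proof.
by rewrite /phim /rphi cosN sinN scaleNr opprK !cr_real ket0_real ket1_real -!map_mxZ -map_mxD.
Qed.

Lemma Psi_real : Psi theta = cplx (rPsi theta).
Proof.
by rewrite /Psi !cr_real ket0_real ket1_real -!map_mxT -!map_mxZ -map_mxD.
Qed.

Lemma Rg2E : Rg theta 2 = Hg R *t cplx (rrot theta).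
Proof. by rewrite /Rg mx2_real. Qed.

Lemma Rg3E : Rg theta 3 = (Xg R *m Hg R) *t cplx (rrot (- theta)).
Proof. by rewrite /Rg /= /rrot cosN sinN opprK mx2_real. Qed.

Lemma Rg_unitary k : (k == 2) || (k == 3) -> adj (Rg theta k) *m Rg theta k = 1%:M.
Proof.
case/orP=> /eqP ->; rewrite ?Rg2E ?Rg3E adj_tens tensmx_mul rot_unitary.
  by rewrite H_unitary tensmx11.
by rewrite adjM mulmxA -(mulmxA (adj (Hg R))) X_adj X_invol mulmx1 H_unitary tensmx11.
Qed.

Lemma Rg2_ket00 : adj (Rg theta 2) *m (ket0 R *t ket0 R) = ketp R *t phip theta.
Proof.
rewrite Rg2E adj_tens tensmx_mul rot_ket0 phip_real H_real ket0_real ketp_real.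
by rewrite adj_real -map_mxM rH_ket0.
Qed.

Lemma Rg3_ket00 : adj (Rg theta 3) *m (ket0 R *t ket0 R) = ketm R *t phim theta.
Proof.
rewrite Rg3E adj_tens tensmx_mul rot_ket0 phim_real X_real H_real ket0_real ketm_real.
by rewrite -map_mxM adj_real -map_mxM rXH_ket0.
Qed.

Lemma Rg_conj_P00 k : (k == 2) || (k == 3) ->
  adj (Rg theta k) *m (P0 R *t P0 R) *m Rg theta k = 1%:M - Omega theta k.
Proof.
have P00 : P0 R *t P0 R = proj (ket0 R *t ket0 R) by rewrite proj_tens.
case/orP=> /eqP ->; rewrite [Omega _ _]/= opprB addrC subrK P00 proj_conj.
  by rewrite Rg2_ket00 proj_tens.
by rewrite Rg3_ket00 proj_tens.
Qed.

Lemma Rg_conj_compl_P00 k : (k == 2) || (k == 3) ->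
  adj (Rg theta k) *m (1%:M - P0 R *t P0 R) *m Rg theta k = Omega theta k.
Proof.
move=> hk; rewrite mulmxBr mulmx1 mulmxBl (Rg_unitary hk) (Rg_conj_P00 hk).
by rewrite opprB addrC subrK.
Qed.

(* Omega_2 and Omega_3 remove orthogonal rank-one projectors. *)
Lemma Omega23 : Omega theta 2 *m Omega theta 3 =
  1%:M - proj (ketm R) *t proj (phim theta) - proj (ketp R) *t proj (phip theta).
Proof.
rewrite /= mulmxBl mul1mx mulmxBr mulmx1 tensmx_mul proj_ketp_ketm tens0mx.
by rewrite subr0.
Qed.

Lemma Omega123 : Omega theta 1 *m Omega theta 2 *m Omega theta 3 = proj (Psi theta).
Proof.
rewrite -mulmxA Omega23 /= P0_real P1_real ketp_real ketm_real phip_real phim_real.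
rewrite Psi_real !proj_real -!map_mxT -map_mxD -[1%:M](map_mx1 (real_complex R)).
by rewrite -!map_mxB -map_mxM rOmega1_proj.
Qed.

End RotatedFrames.

Section AncillaRegister.
Variable R : realType.
Local Notation C := R[i].

Lemma at1_mul m k (U V : 'M[C]_2) : at1 m k U *m at1 m k V = at1 m k (U *m V).
Proof.
elim: m k => [|m IH] [|k] /=; rewrite ?mulmx1 // tensmx_mul ?mulmx1 //.
by rewrite IH.
Qed.

Lemma at1_1 m k : at1 m k (1%:M : 'M[C]_2) = 1%:M.
Proof. by elim: m k => [|m IH] [|k] //=; rewrite ?IH tensmx11. Qed.

Lemma at1_0 m k : (k < m)%N -> at1 m k (0 : 'M[C]_2) = 0.
Proof.
elim: m k => [|m IH] [|k] //= lt_km; first by rewrite tens0mx.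
by rewrite IH // tensmx0.
Qed.

Lemma at1_comm m k l (U V : 'M[C]_2) : k != l ->
  at1 m k U *m at1 m l V = at1 m l V *m at1 m k U.
Proof.
elim: m k l => [|m IH] k l kl; first by [].
case: k l kl => [|k] [|l] kl /=.
- by rewrite eqxx in kl.
- by rewrite !tensmx_mul !mulmx1 !mul1mx.
- by rewrite !tensmx_mul !mulmx1 !mul1mx.
- by rewrite !tensmx_mul !mul1mx IH.
Qed.

Lemma zero_fixed m k : at1 m k (P0 R) *m zeroproj R m = zeroproj R m.
Proof.
elim: m k => [|m IH] [|k] /=; rewrite ?mul1mx // tensmx_mul ?P0_idem ?mulmx1 ?mul1mx //.
by rewrite IH.
Qed.

Lemma flip_killed m a : (a < m)%N ->
  at1 m a (P0 R) *m at1 m a (Xg R) *m zeroproj R m = 0.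
Proof.
move=> lt_am; rewrite -[zeroproj R m](zero_fixed m a) mulmxA !at1_mul.
by rewrite P0_X_P0 at1_0 ?mul0mx.
Qed.

Section TwoAncillas.
Variables (m a b : nat).
Hypotheses (lt_am : (a < m)%N) (lt_bm : (b < m)%N) (neq_ba : b != a).
Local Notation Q := (at1 m a (P0 R) *m at1 m b (P0 R)).
Local Notation Z := (zeroproj R m).

Lemma pair_fixed : Q *m Z = Z.
Proof. by rewrite -mulmxA !zero_fixed. Qed.

Lemma pair_kill_first : Q *m at1 m a (Xg R) *m Z = 0.
Proof.
rewrite -(mulmxA (at1 m a (P0 R))) (at1_comm _ _ _ neq_ba) mulmxA -mulmxA zero_fixed.
exact: flip_killed.
Qed.

Lemma pair_kill_second : Q *m at1 m b (Xg R) *m Z = 0.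
Proof. by rewrite -!mulmxA (mulmxA (at1 m b (P0 R))) flip_killed // !mulmx0. Qed.

Lemma pair_kill_both : Q *m (at1 m a (Xg R) *m at1 m b (Xg R)) *m Z = 0.
Proof.
rewrite -!mulmxA (mulmxA (at1 m b (P0 R)) (at1 m a (Xg R))) (at1_comm _ _ _ neq_ba).
by rewrite -(mulmxA (at1 m a (Xg R))) (mulmxA (at1 m b (P0 R))) flip_killed // !mulmx0.
Qed.

End TwoAncillas.
End AncillaRegister.

Section Actions.
Variables (K : comPzRingType) (n q : nat) (Z : 'M[K]_q).

Definition acts_as (G : 'M[K]_(n * q)) (E : 'M[K]_n) :=
  forall sigma : 'M[K]_n, G *m (sigma *t Z) = (E *m sigma) *t Z.

Lemma acts_as_mul G1 G2 E1 E2 :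
  acts_as G1 E1 -> acts_as G2 E2 -> acts_as (G1 *m G2) (E1 *m E2).
Proof. by move=> h1 h2 sigma; rewrite -mulmxA h2 h1 mulmxA. Qed.

End Actions.

Section Circuits.
Variables (R : realType) (theta : R) (m : nat).
Local Notation Z := (zeroproj R m).

Lemma CX1_ctrl a : CX R m Sys1 (Anc a) =
  (P0 R *t 1%:M) *t 1%:M + (P1 R *t 1%:M) *t at1 m a (Xg R).
Proof. by rewrite /CX /onq /sysop tensmx_mul mulmx1 mul1mx. Qed.

Lemma CX2_ctrl a : CX R m Sys2 (Anc a) =
  (1%:M *t P0 R) *t 1%:M + (1%:M *t P1 R) *t at1 m a (Xg R).
Proof. by rewrite /CX /onq /sysop tensmx_mul mulmx1 mul1mx. Qed.

Lemma CCX_ctrl a : CCX R m Sys1 Sys2 (Anc a) =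
  (1%:M - P1 R *t P1 R) *t 1%:M + (P1 R *t P1 R) *t at1 m a (Xg R).
Proof.
rewrite /CCX /onq /sysop !tensmx_mul !mulmx1 !mul1mx addrC.
by rewrite -(tensmx11 _ (2 * 2) (qdim m)) -tensmxBl.
Qed.

Lemma flip_XX_P11 :
  (Xg R *t Xg R) *m (1%:M - P1 R *t P1 R) *m (Xg R *t Xg R) = 1%:M - P0 R *t P0 R.
Proof.
by rewrite mulmxBr mulmx1 mulmxBl !tensmx_mul X_invol X_P1_X tensmx11.
Qed.

Section OneAncilla.
Variable a : nat.
Hypothesis lt_am : (a < m)%N.

Lemma M1_act : acts_as Z (M1 R m a) (Omega theta 1).
Proof.
move=> sigma; rewrite /M1 CX1_ctrl CX2_ctrl /onq anc_parity ?zero_fixed ?flip_killed //.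
  by rewrite !tensmx_mul !mulmx1 !mul1mx.
by rewrite at1_mul X_invol at1_1.
Qed.

Lemma Mt_act k : (k == 2) || (k == 3) -> acts_as Z (Mt theta m k a) (Omega theta k).
Proof.
move=> hk sigma; rewrite /Mt /sysop /onq CCX_ctrl anc_select ?zero_fixed ?flip_killed //.
by rewrite flip_XX_P11 Rg_conj_compl_P00.
Qed.

End OneAncilla.

Lemma Mb_act k a b : (k == 2) || (k == 3) -> (a < m)%N -> (b < m)%N -> b != a ->
  acts_as Z (Mb theta m k a b) (Omega theta k).
Proof.
move=> hk lt_am lt_bm neq_ba sigma.
rewrite /Mb /sysop /onq CX1_ctrl CX2_ctrl anc_pair_select ?pair_fixed //;
  [|exact: pair_kill_first | exact: pair_kill_second | exact: pair_kill_both].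
by rewrite tensmx_mul mulmx1 mul1mx Rg_conj_P00 // opprB addrC subrK.
Qed.

End Circuits.

Unset Implicit Arguments.

Theorem mainTheorem5 (R : realType) (theta : R) :
  0 < theta < pi / 4 ->
  (forall (k : nat) (sigma : 'M[R[i]]_(2 * 2)), ((k == 2) || (k == 3))%N ->
     Mt theta 1 k 0 *m (sigma *t zeroproj R 1)
     = (Omega theta k *m sigma) *t zeroproj R 1) /\
  Omega theta 1 *m Omega theta 2 *m Omega theta 3 = proj (Psi theta) /\
  (forall sigma : 'M[R[i]]_(2 * 2),
     M1 R 3 0 *m Mt theta 3 2 1 *m Mt theta 3 3 2 *m (sigma *t zeroproj R 3)
     = (proj (Psi theta) *m sigma) *t zeroproj R 3) /\
  (forall (k : nat) (sigma : 'M[R[i]]_(2 * 2)), ((k == 2) || (k == 3))%N ->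
     Mb theta 2 k 0 1 *m (sigma *t zeroproj R 2)
     = (Omega theta k *m sigma) *t zeroproj R 2) /\
  (forall sigma : 'M[R[i]]_(2 * 2),
     M1 R 5 0 *m Mb theta 5 2 1 2 *m Mb theta 5 3 3 4 *m (sigma *t zeroproj R 5)
     = (proj (Psi theta) *m sigma) *t zeroproj R 5).
Proof.
move=> _.
split; first by move=> k sigma hk; apply: Mt_act.
split; first exact: Omega123.
split.
  rewrite -Omega123; apply: acts_as_mul; first apply: acts_as_mul.
  - exact: M1_act.
  - by apply: Mt_act.
  - by apply: Mt_act.
split; first by move=> k sigma hk; apply: Mb_act.
rewrite -Omega123; apply: acts_as_mul; first apply: acts_as_mul.
- exact: M1_act.
- by apply: Mb_act.
- by apply: Mb_act.
Qed.
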